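(* Let $\Xi>1$, let $\rho:[1,\Xi]\to\mathbb{R}$ be continuous, let $\tilde\lambda\in\mathbb{C}$, and let $c>-1$ be a real number satisfying \[ 1=\sqrt{1+c}+\frac12\int_1^\Xi dT\,\frac{\rho(T)}{(\sqrt{1+c}+\sqrt{T+c})\sqrt{T+c}}. \] For $X\geq 1$ put $W(X):=\sqrt{X+c}+\frac12\int_1^\Xi dT\,\frac{\rho(T)}{(\sqrt{X+c}+\sqrt{T+c})\sqrt{T+c}}$, and for $X,Y\geq 1$ put \[ G(X|Y):=\frac{4\tilde\lambda^2}{\sqrt{X+c}\,\sqrt{Y+c}\,(\sqrt{X+c}+\sqrt{Y+c})^2},\qquad G(X,Y,Y):=8\tilde\lambda\frac{\partial}{\partial Y}\frac{W(X)-W(Y)}{X-Y}. \] Then $G(X|Y)$ solves the integral equation for the $(1{+}1)$-point function: for all $X,Y\in[1,\Xi]$ with $X\neq Y$, \[ W(X)\,G(X|Y)=-\tilde\lambda\,G(X,Y,Y)-\frac12\int_1^\Xi dT\,\rho(T)\,\frac{G(X|Y)-G(T|Y)}{X-T}. \]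
   Context: This is the Schwinger–Dyson equation for the large-matrix limit of the connected correlation function with two boundary components of length one in the $\Phi^3$ matrix model (two-dimensional case, with normalisation parameters $Z=1$, $\nu=0$); $G(X,Y,Y)$ is the corresponding 3-point function. Square roots are positive; the integrand at $T=X$ is understood by continuous extension. *)

From Stdlib Require Import Reals.
From Coquelicot Require Import Coquelicot.
Open Scope R_scope.

Definition Wfun (Xi c : R) (rho : R -> R) (X : R) : R :=
  sqrt (X + c) + / 2 * RInt (fun T => rho T /
     ((sqrt (X + c) + sqrt (T + c)) * sqrt (T + c))) 1 Xi.

Definition gr (c X Y : R) : R :=
  4 / (sqrt (X + c) * sqrt (Y + c) * (sqrt (X + c) + sqrt (Y + c)) ^ 2).

Definition G11 (lam : C) (c X Y : R) : C :=
  (lam * lam * RtoC (gr c X Y))%C.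

Definition G3 (Xi c : R) (rho : R -> R) (lam : C) (X Y : R) : C :=
  (RtoC 8 * lam * RtoC (Derive (fun Y' => ((Wfun Xi c rho X - Wfun Xi c rho Y') / (X - Y'))%R) Y))%C.

(* integrand (G(X|Y) - G(T|Y)) / (X - T), with its continuous extension at T = X,
   namely d/dX G(X|Y) = lam^2 * d/dX gr(c,X,Y). *)
Definition quotient_integrand (lam : C) (c X Y T : R) : C :=
  if Req_EM_T T X then (lam * lam * RtoC (Derive (fun x => gr c x Y) X))%C
  else ((G11 lam c X Y - G11 lam c T Y) / RtoC (X - T)%R)%C.

Definition continuous_on_Icc (a b : R) (f : R -> R) : Prop :=
  forall x, a <= x <= b ->
    filterlim f (within (fun t => a <= t <= b) (locally x)) (locally (f x)).

From Stdlib Require Import Reals Lra.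
From Coquelicot Require Import Coquelicot.
Open Scope R_scope.

(* Write s, t, u for sqrt(X+c), sqrt(Y+c), sqrt(T+c), so that X - Y = s^2 - t^2 and
   every term of the equation is a rational function of s, t, u integrated against
   rho(T) dT. The difference quotient of W is 1/(s+t) minus such an integral, its
   Y-derivative is computed by differentiating under the integral sign, and the
   difference quotient of G(X|Y) in X is again rational in s, t, u. The equation
   then reduces to an identity for the sqrt(X+c) part of W plus a pointwise identity
   between the kernels, integrated against rho. *)

Definition clamp (a b t : R) : R := Rmax a (Rmin b t).

Lemma clamp_id (a b t : R) : a <= t <= b -> clamp a b t = t.
Proof. intros Ht. unfold clamp. rewrite Rmin_right, Rmax_right; lra. Qed.

Lemma clamp_in (a b t : R) : a <= b -> a <= clamp a b t <= b.
Proof. intros Hab. unfold clamp, Rmax, Rmin. repeat destruct Rle_dec; lra. Qed.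

Lemma continuous_clamp (a b x : R) : continuous (clamp a b) x.
Proof.
apply filterlim_locally. intros eps. exists eps. intros y Hy.
change (Rabs (clamp a b y - clamp a b x) < eps).
change (Rabs (y - x) < eps) in Hy.
unfold clamp, Rmax, Rmin in *.
revert Hy. repeat destruct Rle_dec; unfold Rabs; repeat destruct Rcase_abs; lra.
Qed.

Lemma continuous_on_Icc_clamp (a b : R) (f : R -> R) :
  a <= b -> continuous_on_Icc a b f -> forall x, continuous (fun t => f (clamp a b t)) x.
Proof.
intros Hab Hf x P HP.
change (locally x (fun t => P (f (clamp a b t)))).
apply (filter_imp (fun t => a <= clamp a b t <= b -> P (f (clamp a b t)))).
- intros t Ht. apply Ht, clamp_in, Hab.
- apply (continuous_clamp a b x (fun t => a <= t <= b -> P (f t))).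
  apply (Hf _ (clamp_in a b x Hab) P HP).
Qed.

Definition gr_st (s t : R) : R := 4 / (s * t * (s + t) ^ 2).
Definition w_kernel (s u : R) : R := / ((s + u) * u).
Definition slope_kernel (s t u : R) : R := / ((s + t) * (s + u) * (t + u) * u).
Definition dslope_kernel (s t u : R) : R :=
  - (s + 2 * t + u) / (2 * t * (s + t) ^ 2 * (s + u) * (t + u) ^ 2 * u).
Definition gr_slope (s t u : R) : R :=
  - 4 * (s * s + s * u + u * u + 2 * t * (s + u) + t * t)
  / (s * t * u * (s + u) * (s + t) ^ 2 * (t + u) ^ 2).

Lemma gr_sqrt (c X Y : R) : gr c X Y = gr_st (sqrt (X + c)) (sqrt (Y + c)).
Proof. reflexivity. Qed.

Lemma sqrt_shift_pos (c x : R) : 0 < x + c -> 0 < sqrt (x + c).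
Proof. apply sqrt_lt_R0. Qed.

Lemma sqrt_shift_sq (c x : R) : 0 < x + c -> sqrt (x + c) * sqrt (x + c) = x + c.
Proof. intros H. apply sqrt_sqrt. lra. Qed.

Lemma w_kernel_sub (s t u : R) : 0 < s -> 0 < t -> 0 < u ->
  w_kernel s u - w_kernel t u = - (s * s - t * t) * slope_kernel s t u.
Proof. intros. unfold w_kernel, slope_kernel. field. lra. Qed.

Lemma gr_st_slope (s t u : R) : 0 < s -> 0 < t -> 0 < u -> s <> u ->
  (gr_st s t - gr_st u t) / (s * s - u * u) = gr_slope s t u.
Proof.
intros Hs Ht Hu Hsu. unfold gr_st, gr_slope.
replace (s * s - u * u) with ((s - u) * (s + u)) by ring.
field. repeat split; lra.
Qed.

Lemma w_kernel_mul_gr_st (s t u : R) : 0 < s -> 0 < t -> 0 < u ->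
  w_kernel s u * gr_st s t = 8 * dslope_kernel s t u - gr_slope s t u.
Proof.
intros. unfold w_kernel, gr_st, dslope_kernel, gr_slope. field. lra.
Qed.

Lemma is_derive_gr (c X Y : R) : 0 < X + c -> 0 < Y + c ->
  is_derive (fun x => gr c x Y) X
    (gr_slope (sqrt (X + c)) (sqrt (Y + c)) (sqrt (X + c))).
Proof.
intros HX HY. unfold gr, gr_slope.
assert (Hs := sqrt_shift_pos c X HX). assert (Ht := sqrt_shift_pos c Y HY).
auto_derive.
- repeat split; try lra. apply Rgt_not_eq. repeat apply Rmult_lt_0_compat; nra.
- field. lra.
Qed.

Lemma is_derive_slope_kernel (c s y u : R) : 0 < s -> 0 < y + c -> 0 < u ->
  is_derive (fun z => slope_kernel s (sqrt (z + c)) u) y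
    (dslope_kernel s (sqrt (y + c)) u).
Proof.
intros Hs Hy Hu. unfold slope_kernel, dslope_kernel.
assert (Ht := sqrt_shift_pos c y Hy).
auto_derive.
- repeat split; try lra. apply Rgt_not_eq. repeat apply Rmult_lt_0_compat; lra.
- field. lra.
Qed.

Lemma quotient_integrand_gr_slope (lam : C) (c X Y T : R) :
  0 < X + c -> 0 < Y + c -> 0 < T + c ->
  quotient_integrand lam c X Y T
  = (lam * lam * RtoC (gr_slope (sqrt (X + c)) (sqrt (Y + c)) (sqrt (T + c))))%C.
Proof.
intros HX HY HT. unfold quotient_integrand.
destruct Req_EM_T as [-> | HTX].
- f_equal. f_equal. apply is_derive_unique, is_derive_gr; assumption.
- assert (Hs := sqrt_shift_pos c X HX). assert (Hu := sqrt_shift_pos c T HT).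
  assert (Es := sqrt_shift_sq c X HX). assert (Eu := sqrt_shift_sq c T HT).
  assert (Hsu : sqrt (X + c) <> sqrt (T + c)) by (intros E; apply HTX; rewrite E in Es; lra).
  rewrite <- gr_st_slope by (try apply sqrt_shift_pos; assumption).
  rewrite Es, Eu, <- !gr_sqrt.
  replace (X + c - (T + c)) with (X - T) by ring.
  rewrite RtoC_div, !RtoC_minus by lra.
  unfold G11, Cdiv. ring.
Qed.

Lemma is_RInt_scal_r (g : R -> R) (w a b I : R) : is_RInt g a b I ->
  is_RInt (fun t => g t * w) a b (I * w).
Proof.
intros Hg. apply (is_RInt_ext (fun t => scal w (g t))).
- intros t _. apply Rmult_comm.
- rewrite Rmult_comm. apply (is_RInt_scal (V := R_NormedModule)), Hg.
Qed.

Lemma RInt_scal_C (g : R -> R) (w : C) (a b : R) : ex_RInt g a b ->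
  RInt (V := C_R_CompleteNormedModule) (fun T => scal (g T) w) a b
  = (RtoC (RInt g a b) * w)%C.
Proof.
intros Hg. apply is_RInt_unique. rewrite <- scal_R_Cmult.
apply (RInt_correct (V := R_CompleteNormedModule)) in Hg.
destruct w as [w1 w2].
apply is_RInt_fct_extend_pair; apply is_RInt_scal_r, Hg.
Qed.

Lemma SD_identity_RtoC (lam : C) (w g d q : R) : w * g = - (8 * d) - / 2 * q ->
  (RtoC w * (lam * lam * RtoC g))%C
  = (- lam * (RtoC 8 * lam * RtoC d) - RtoC (/ 2) * (RtoC q * (lam * lam)))%C.
Proof.
intros H.
transitivity (lam * lam * RtoC (w * g))%C; [rewrite RtoC_mult; ring|].
rewrite H, RtoC_minus, RtoC_opp, !RtoC_mult. ring.
Qed.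

Ltac kernel_continuity :=
  let u := fresh "u" in let Hu := fresh "Hu" in
  intros u Hu; apply (ex_derive_continuous (K := R_AbsRing) (V := R_NormedModule));
  unfold w_kernel, slope_kernel, dslope_kernel, gr_slope; auto_derive;
  repeat split; apply Rgt_not_eq; repeat apply Rmult_lt_0_compat; lra.

Lemma continuity_2d_pt_sqrt_fst (c x y : R) : 0 < x + c ->
  continuity_2d_pt (fun u _ => sqrt (u + c)) x y.
Proof.
intros H. apply (continuity_1d_2d_pt_comp sqrt (fun u _ => u + c)).
- apply continuity_pt_sqrt. lra.
- apply continuity_2d_pt_plus; [apply continuity_2d_pt_id1 | apply continuity_2d_pt_const].
Qed.

Lemma continuity_2d_pt_sqrt_snd (c x y : R) : 0 < y + c ->
  continuity_2d_pt (fun _ v => sqrt (v + c)) x y.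
Proof.
intros H. apply (continuity_1d_2d_pt_comp sqrt (fun _ v => v + c)).
- apply continuity_pt_sqrt. lra.
- apply continuity_2d_pt_plus; [apply continuity_2d_pt_id2 | apply continuity_2d_pt_const].
Qed.

Lemma continuity_2d_pt_snd (f : R -> R) (x y : R) : continuous f y ->
  continuity_2d_pt (fun _ v => f v) x y.
Proof.
intros H. apply (continuity_1d_2d_pt_comp f (fun _ v => v)).
- apply continuity_pt_filterlim, H.
- apply continuity_2d_pt_id2.
Qed.

Lemma locally_2d_shift_pos (c x y : R) : 0 < x + c -> 0 < y + c ->
  locally_2d (fun u v => 0 < u + c /\ 0 < v + c) x y.
Proof.
intros Hx Hy. assert (H : 0 < Rmin (x + c) (y + c)) by (apply Rmin_pos; lra).
exists (mkposreal _ H). simpl. intros u v Hu Hv.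
assert (Rmin (x + c) (y + c) <= x + c) by apply Rmin_l.
assert (Rmin (x + c) (y + c) <= y + c) by apply Rmin_r.
revert Hu Hv. unfold Rabs. repeat destruct Rcase_abs; intros; lra.
Qed.

Lemma locally_shift_pos (c x : R) : 0 < x + c -> locally x (fun y => 0 < y + c).
Proof.
intros Hx. apply (locally_interval _ x (- c) p_infty); simpl; [lra | exact I |].
intros y Hy _. lra.
Qed.

Lemma locally_neq (x z : R) : x <> z -> locally x (fun y => y <> z).
Proof.
intros Hxz. destruct (Rlt_dec x z) as [Hlt | Hge].
- apply (locally_interval _ x m_infty z); simpl; [exact I | exact Hlt |].
  intros y _ Hy. lra.
- apply (locally_interval _ x z p_infty); simpl; [lra | exact I |].
  intros y Hy _. lra.
Qed.

Section Kernel_integrals.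

Variables (Xi c : R) (r : R -> R).
Hypotheses (HXi : 1 <= Xi) (Hc : -1 < c) (Hr : forall x, continuous r x).

Definition kernel_integral (k : R -> R) : R :=
  RInt (fun T => r T * k (sqrt (T + c))) 1 Xi.

Lemma shift_pos_on_Icc (T : R) : Rmin 1 Xi <= T <= Rmax 1 Xi -> 0 < T + c.
Proof. rewrite Rmin_left, Rmax_right; lra. Qed.

Lemma ex_RInt_kernel (k : R -> R) : (forall u, 0 < u -> continuous k u) ->
  ex_RInt (fun T => r T * k (sqrt (T + c))) 1 Xi.
Proof.
intros Hk. apply (ex_RInt_continuous (V := R_CompleteNormedModule)). intros T HT.
apply (continuous_mult (K := R_AbsRing) r (fun T => k (sqrt (T + c)))); [apply Hr|].
apply (continuous_comp (fun T => sqrt (T + c)) k).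
- apply continuous_sqrt_comp, (continuous_plus (fun T => T) (fun _ => c)).
  + apply continuous_id.
  + apply continuous_const.
- apply Hk, sqrt_shift_pos, shift_pos_on_Icc, HT.
Qed.

Lemma kernel_integral_ext (k1 k2 : R -> R) : (forall u, 0 < u -> k1 u = k2 u) ->
  kernel_integral k1 = kernel_integral k2.
Proof.
intros Hk. apply RInt_ext. intros T HT. rewrite Hk; [reflexivity|].
apply sqrt_shift_pos, shift_pos_on_Icc. lra.
Qed.

Lemma kernel_integral_lin (a b : R) (k1 k2 : R -> R) :
  (forall u, 0 < u -> continuous k1 u) -> (forall u, 0 < u -> continuous k2 u) ->
  kernel_integral (fun u => a * k1 u + b * k2 u)
  = a * kernel_integral k1 + b * kernel_integral k2.
Proof.
intros H1 H2. apply is_RInt_unique.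
apply (is_RInt_ext (fun T => plus (scal a (r T * k1 (sqrt (T + c))))
                                  (scal b (r T * k2 (sqrt (T + c)))))).
- intros T _. unfold plus, scal; simpl; unfold mult; simpl. ring.
- apply (is_RInt_plus (V := R_NormedModule) _ _ _ _
           (scal a (kernel_integral k1)) (scal b (kernel_integral k2)));
    apply (is_RInt_scal (V := R_NormedModule));
    apply (RInt_correct (V := R_CompleteNormedModule)), ex_RInt_kernel; assumption.
Qed.

Lemma kernel_integral_scal (a : R) (k : R -> R) : (forall u, 0 < u -> continuous k u) ->
  kernel_integral (fun u => a * k u) = a * kernel_integral k.
Proof.
intros Hk. transitivity (kernel_integral (fun u => a * k u + 0 * k u)).
- apply kernel_integral_ext. intros u _. ring.
- rewrite kernel_integral_lin by assumption. ring.
Qed.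

Lemma Wfun_kernel_integral (y : R) :
  Wfun Xi c r y = sqrt (y + c) + / 2 * kernel_integral (w_kernel (sqrt (y + c))).
Proof. reflexivity. Qed.

Lemma Wfun_slope (X y : R) : 0 < X + c -> 0 < y + c -> y <> X ->
  (Wfun Xi c r X - Wfun Xi c r y) / (X - y)
  = / (sqrt (X + c) + sqrt (y + c))
    - / 2 * kernel_integral (slope_kernel (sqrt (X + c)) (sqrt (y + c))).
Proof.
intros HX Hy HyX. rewrite !Wfun_kernel_integral.
assert (Hs := sqrt_shift_pos c X HX). assert (Ht := sqrt_shift_pos c y Hy).
assert (Es := sqrt_shift_sq c X HX). assert (Et := sqrt_shift_sq c y Hy).
set (s := sqrt (X + c)) in *. set (t := sqrt (y + c)) in *.
assert (Hst : s <> t) by (intros E; apply HyX; rewrite E in Es; lra).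
assert (Hsub : kernel_integral (w_kernel s) - kernel_integral (w_kernel t)
               = - (s * s - t * t) * kernel_integral (slope_kernel s t)).
{ transitivity (kernel_integral (fun u => 1 * w_kernel s u + -1 * w_kernel t u)).
  { rewrite kernel_integral_lin by kernel_continuity. ring. }
  rewrite <- kernel_integral_scal by kernel_continuity.
  apply kernel_integral_ext. intros u Hu. rewrite <- w_kernel_sub by lra. ring. }
assert (Hst2 : s * s - t * t <> 0).
{ replace (s * s - t * t) with ((s - t) * (s + t)) by ring.
  apply Rmult_integral_contrapositive; split; lra. }
replace (X - y) with (s * s - t * t) by lra.
replace (kernel_integral (w_kernel s))
  with (kernel_integral (w_kernel t) - (s * s - t * t) * kernel_integral (slope_kernel s t))
  by lra.
field. split; lra.
Qed.

Lemma is_derive_slope_integral (s Y : R) : 0 < s -> 0 < Y + c ->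
  is_derive (fun y => kernel_integral (slope_kernel s (sqrt (y + c)))) Y
    (kernel_integral (dslope_kernel s (sqrt (Y + c)))).
Proof.
intros Hs HY.
set (f := fun y T => r T * slope_kernel s (sqrt (y + c)) (sqrt (T + c))).
assert (Hf : forall y T, 0 < y + c -> 0 < T + c ->
  is_derive (fun z => f z T) y (r T * dslope_kernel s (sqrt (y + c)) (sqrt (T + c)))).
{ intros y T Hy HT. apply (is_derive_scal (fun z => slope_kernel s (sqrt (z + c)) (sqrt (T + c)))).
  apply is_derive_slope_kernel; [lra | lra | apply sqrt_shift_pos, HT]. }
unfold kernel_integral.
rewrite (RInt_ext _ (fun T => Derive (fun z => f z T) Y)).
2:{ intros T HT. symmetry. apply is_derive_unique, Hf; [lra | apply shift_pos_on_Icc; lra]. }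
apply (is_derive_RInt_param f).
- apply (filter_imp (fun y => 0 < y + c)); [|apply locally_shift_pos, HY].
  intros y Hy T HT. eexists. apply Hf; [lra | apply shift_pos_on_Icc, HT].
- intros T HT. assert (HTc := shift_pos_on_Icc T HT).
  apply (continuity_2d_pt_ext_loc
    (fun y T => r T * dslope_kernel s (sqrt (y + c)) (sqrt (T + c)))).
  { apply (locally_2d_impl (fun y T => 0 < y + c /\ 0 < T + c)).
    - apply locally_2d_forall. intros y T' [Hy HT']. symmetry. apply is_derive_unique, Hf; lra.
    - apply locally_2d_shift_pos; lra. }
  apply continuity_2d_pt_mult; [apply continuity_2d_pt_snd, Hr|].
  assert (Ht := sqrt_shift_pos c Y HY). assert (Hu := sqrt_shift_pos c T HTc).
  unfold dslope_kernel, Rdiv. cbn [pow].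
  repeat first [ apply continuity_2d_pt_mult | apply continuity_2d_pt_plus
               | apply continuity_2d_pt_opp | apply continuity_2d_pt_inv
               | apply continuity_2d_pt_const
               | apply continuity_2d_pt_sqrt_fst; lra
               | apply continuity_2d_pt_sqrt_snd; lra ].
  apply Rgt_not_eq. repeat apply Rmult_lt_0_compat; lra.
- apply (filter_imp (fun y => 0 < y + c)); [|apply locally_shift_pos, HY].
  intros y Hy. apply ex_RInt_kernel.
  assert (Ht := sqrt_shift_pos c y Hy). kernel_continuity.
Qed.

Lemma Derive_Wfun_slope (X Y : R) : 0 < X + c -> 0 < Y + c -> Y <> X ->
  Derive (fun y => (Wfun Xi c r X - Wfun Xi c r y) / (X - y)) Y
  = - / (2 * sqrt (Y + c) * (sqrt (X + c) + sqrt (Y + c)) ^ 2)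
    - / 2 * kernel_integral (dslope_kernel (sqrt (X + c)) (sqrt (Y + c))).
Proof.
intros HX HY HYX.
assert (Hs := sqrt_shift_pos c X HX). assert (Ht := sqrt_shift_pos c Y HY).
set (s := sqrt (X + c)) in *.
set (I := fun y => kernel_integral (slope_kernel s (sqrt (y + c)))).
rewrite (Derive_ext_loc _ (fun y => / (s + sqrt (y + c)) - / 2 * I y)).
2:{ apply (filter_imp (fun y => 0 < y + c /\ y <> X)).
    - intros y [Hy HyX]. apply Wfun_slope; assumption.
    - apply filter_and; [apply locally_shift_pos | apply locally_neq]; assumption. }
assert (HI := is_derive_slope_integral s Y Hs HY).
apply is_derive_unique. auto_derive.
- repeat split; try lra. exists (kernel_integral (dslope_kernel s (sqrt (Y + c)))). exact HI.
- replace (Derive (fun y : R => I y) Y) with (kernel_integral (dslope_kernel s (sqrt (Y + c))))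
    by (symmetry; apply is_derive_unique, HI).
  field. lra.
Qed.

Lemma Wfun_SD_equation_real (X Y : R) : 0 < X + c -> 0 < Y + c -> Y <> X ->
  Wfun Xi c r X * gr c X Y
  = - (8 * Derive (fun y => (Wfun Xi c r X - Wfun Xi c r y) / (X - y)) Y)
    - / 2 * kernel_integral (gr_slope (sqrt (X + c)) (sqrt (Y + c))).
Proof.
intros HX HY HYX. rewrite Derive_Wfun_slope, Wfun_kernel_integral, gr_sqrt by assumption.
assert (Hs := sqrt_shift_pos c X HX). assert (Ht := sqrt_shift_pos c Y HY).
set (s := sqrt (X + c)) in *. set (t := sqrt (Y + c)) in *.
assert (Hkernel : kernel_integral (w_kernel s) * gr_st s t
  = 8 * kernel_integral (dslope_kernel s t) - kernel_integral (gr_slope s t)).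
{ rewrite Rmult_comm, <- kernel_integral_scal by kernel_continuity.
  rewrite (kernel_integral_ext _ (fun u => 8 * dslope_kernel s t u + -1 * gr_slope s t u)).
  { rewrite kernel_integral_lin by kernel_continuity. ring. }
  intros u Hu. rewrite Rmult_comm, w_kernel_mul_gr_st by assumption. ring. }
rewrite Rmult_plus_distr_r, Rmult_assoc, Hkernel. unfold gr_st. field. lra.
Qed.

Lemma SD_equation_continuous (lam : C) (X Y : R) : 0 < X + c -> 0 < Y + c -> X <> Y ->
  (RtoC (Wfun Xi c r X) * G11 lam c X Y)%C =
  (- lam * G3 Xi c r lam X Y
   - RtoC (/ 2) * RInt (V := C_R_CompleteNormedModule)
       (fun T => scal (r T) (quotient_integrand lam c X Y T)) 1 Xi)%C.
Proof.
intros HX HY HXY.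
assert (Hs := sqrt_shift_pos c X HX). assert (Ht := sqrt_shift_pos c Y HY).
rewrite (RInt_ext (V := C_R_CompleteNormedModule) _
  (fun T => scal (r T * gr_slope (sqrt (X + c)) (sqrt (Y + c)) (sqrt (T + c))) (lam * lam)%C)).
2:{ intros T HT. assert (HTc : 0 < T + c) by (apply shift_pos_on_Icc; lra).
    rewrite quotient_integrand_gr_slope, !scal_R_Cmult, RtoC_mult by assumption.
    match goal with |- ?a = ?b => change (a = b :> C) end. ring. }
rewrite RInt_scal_C by (apply ex_RInt_kernel; kernel_continuity).
apply SD_identity_RtoC, Wfun_SD_equation_real; auto.
Qed.

End Kernel_integrals.

Lemma Wfun_ext (Xi c : R) (f g : R -> R) (y : R) : 1 <= Xi ->
  (forall T, 1 <= T <= Xi -> f T = g T) -> Wfun Xi c f y = Wfun Xi c g y.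
Proof.
intros HXi Hfg. unfold Wfun. do 2 f_equal. apply RInt_ext.
rewrite Rmin_left, Rmax_right by lra. intros T HT. rewrite Hfg by lra. reflexivity.
Qed.

Lemma G3_ext (Xi c : R) (f g : R -> R) (lam : C) (X Y : R) : 1 <= Xi ->
  (forall T, 1 <= T <= Xi -> f T = g T) -> G3 Xi c f lam X Y = G3 Xi c g lam X Y.
Proof.
intros HXi Hfg. unfold G3. do 2 f_equal. apply Derive_ext. intros y.
rewrite !(Wfun_ext Xi c f g) by assumption. reflexivity.
Qed.

Theorem proposition6 (Xi : R) (rho : R -> R) (lam : C) (c : R) :
  1 < Xi ->
  continuous_on_Icc 1 Xi rho ->
  -1 < c ->
  1 = sqrt (1 + c) + / 2 * RInt (fun T => rho T /
        ((sqrt (1 + c) + sqrt (T + c)) * sqrt (T + c))) 1 Xi ->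
  forall X Y : R, 1 <= X <= Xi -> 1 <= Y <= Xi -> X <> Y ->
    (RtoC (Wfun Xi c rho X) * G11 lam c X Y)%C =
    (- lam * G3 Xi c rho lam X Y
     - RtoC (/ 2) * RInt (V := C_R_CompleteNormedModule)
         (fun T => scal (rho T) (quotient_integrand lam c X Y T)) 1 Xi)%C.
Proof.
intros HXi Hrho Hc _ X Y HX HY HXY.
(* Differentiation under the integral sign needs the integrand to be jointly
   continuous around the endpoints, so rho is first extended continuously to R. *)
set (r := fun t => rho (clamp 1 Xi t)).
assert (Hrho_r : forall T, 1 <= T <= Xi -> rho T = r T)
  by (intros T HT; unfold r; rewrite clamp_id by exact HT; reflexivity).
rewrite (Wfun_ext Xi c rho r), (G3_ext Xi c rho r) by (assumption || lra).
rewrite (RInt_ext (V := C_R_CompleteNormedModule) _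
  (fun T => scal (r T) (quotient_integrand lam c X Y T))).
- apply SD_equation_continuous; try lra.
  apply continuous_on_Icc_clamp; [lra | exact Hrho].
- rewrite Rmin_left, Rmax_right by lra. intros T HT. rewrite Hrho_r by lra. reflexivity.
Qed.
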